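(* For every integer $n\ge 1$, $|\mathfrak D^1_{2n}(1342,4213)|=2^{n-1}$.
   Context: A Dumont permutation of the first kind of length $2n$ is a permutation $\pi\in\mathfrak S_{2n}$ such that for every $i=1,\dots,2n$: if $\pi(i)$ is even then $i<2n$ and $\pi(i)>\pi(i+1)$; if $\pi(i)$ is odd then $i=2n$ or $\pi(i)<\pi(i+1)$. $\mathfrak D^1_{2n}$ denotes the set of these. A permutation $\sigma$ contains a pattern $\tau\in\mathfrak S_k$ if some subsequence $(\sigma(i_1),\dots,\sigma(i_k))$, $i_1<\dots<i_k$, is order-isomorphic to $\tau$; otherwise $\sigma$ avoids $\tau$. $\mathfrak D^1_{2n}(T)$ denotes the set of permutations in $\mathfrak D^1_{2n}$ avoiding every pattern in $T$. *)

From mathcomp Require Import all_boot all_fingroup.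
Set Implicit Arguments. Unset Strict Implicit. Unset Printing Implicit Defensive.

(* Permutations of {1,...,2n} are represented as s : {perm 'I_(2n)}, with
   positions and values shifted to be 0-based: the 1-based value pi(i+1)
   at 1-based position i+1 is (s i).+1. *)

Definition pval (m : nat) (s : {perm 'I_m}) (i : 'I_m) : nat := (s i).+1.

Definition oneline (m : nat) (s : {perm 'I_m}) : seq nat :=
  [seq pval s j | j <- enum 'I_m].

Definition dumont1 (m : nat) (s : {perm 'I_m}) : bool :=
  [forall i : 'I_m,
     if ~~ odd (pval s i) then
       (i.+1 < m) && (nth 0 (oneline s) i.+1 < pval s i)
     else
       (i.+1 == m) || (pval s i < nth 0 (oneline s) i.+1)].

Definition contains (m : nat) (s : {perm 'I_m}) (tau : seq nat) : bool :=
  [exists f : {ffun 'I_(size tau) -> 'I_m},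
    [forall a : 'I_(size tau), forall b : 'I_(size tau),
       ((a < b)%N ==> (f a < f b)%N) &&
       ((pval s (f a) < pval s (f b))%N == (nth 0 tau a < nth 0 tau b)%N)]].

Definition avoids (m : nat) (s : {perm 'I_m}) (tau : seq nat) : bool :=
  ~~ contains s tau.

Definition dumont1_avoiding (n : nat) (T : seq (seq nat)) : {set {perm 'I_(n.*2)}} :=
  [set s : {perm 'I_(n.*2)} | dumont1 s && all (avoids s) T].

From Pilot Require Import Defs.
From mathcomp Require Import all_boot all_fingroup zify.
Set Implicit Arguments. Unset Strict Implicit. Unset Printing Implicit Defensive.

(* Call a permutation good if it is Dumont of the first kind and avoids 1342 and
   4213.  In a good permutation the first two entries are the two elements of a
   pair {2k-1, 2k}, and the next two entries form an adjacent pair: {2k+1, 2k+2}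
   when the first pair descends, {2k-3, 2k-2} when it ascends.  Deleting the
   first pair and closing the gap in the values therefore gives a good
   permutation of length 2n-2, and conversely every good permutation of length
   2n-2 arises from exactly two good permutations of length 2n: one starting
   with a descending pair just below its first pair, one starting with an
   ascending pair just above it.  So the count doubles at each step. *)

(** * Pairs of values *)

Definition partner (x : nat) := if odd x then x.+1 else x.-1.
Definition pair_max (x : nat) := if odd x then x.+1 else x.
Definition bump2 (P v : nat) := if v < P.-1 then v else v.+2.
Definition unbump2 (P v : nat) := if v <= P then v else v - 2.

Lemma pair_cases x :
  (odd x /\ partner x = x.+1 /\ pair_max x = x.+1) \/
  (~~ odd x /\ partner x = x.-1 /\ pair_max x = x).
Proof. by rewrite /partner /pair_max; case: ifP; [left | right]. Qed.

Lemma bump2_cases P v :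
  (v < P.-1 /\ bump2 P v = v) \/ (P.-1 <= v /\ bump2 P v = v.+2).
Proof. by rewrite /bump2; case: ltnP; [left | right]. Qed.

Lemma odd_pair_max x : odd (pair_max x) = false.
Proof. by rewrite /pair_max; case: ifP => //= ->. Qed.

Lemma ltn_bump2 P : {mono bump2 P : u v / u < v}.
Proof. by move=> u v; case: (bump2_cases P u) (bump2_cases P v); lia. Qed.

Lemma bump2_inj P : injective (bump2 P).
Proof. by move=> u v; case: (bump2_cases P u) (bump2_cases P v); lia. Qed.

Lemma odd_bump2 P v : odd (bump2 P v) = odd v.
Proof. by rewrite /bump2; case: ifP => //= _; rewrite negbK. Qed.

Lemma unbump2K P v : 0 < P -> v != P.-1 -> v != P -> bump2 P (unbump2 P v) = v.
Proof. by rewrite /unbump2 /bump2; case: ifP; case: ifP; lia. Qed.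

Lemma bump2_partner P v : 0 < v -> ~~ odd P -> bump2 P (partner v) = partner (bump2 P v).
Proof. by rewrite /partner odd_bump2; case: ifP; rewrite /bump2; case: ifP; case: ifP; lia. Qed.

Lemma bump2_neq_pair x v : 0 < x ->
  (bump2 (pair_max x) v != x) && (bump2 (pair_max x) v != partner x).
Proof. by case: (pair_cases x) (bump2_cases (pair_max x) v); lia. Qed.

Lemma ltn_bump2_pair x v : 0 < x ->
  (bump2 (pair_max x) v < x) = (bump2 (pair_max x) v < partner x).
Proof. by case: (pair_cases x) (bump2_cases (pair_max x) v); lia. Qed.

(** * Dumont sequences and patterns *)

Definition dumont_rel : rel nat := fun x y => if odd x then x < y else y < x.

Definition dumont_seq (t : seq nat) : bool :=
  if t is x :: s then path dumont_rel x s && odd (last x s) else true.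

Lemma dumont_seqP t :
  reflect (forall i, i < size t ->
             if ~~ odd (nth 0 t i) then (i.+1 < size t) && (nth 0 t i.+1 < nth 0 t i)
             else (i.+1 == size t) || (nth 0 t i < nth 0 t i.+1))
          (dumont_seq t).
Proof.
case: t => [|x s] /=; first by left.
apply: (iffP andP) => [[/(pathP 0) steps odd_last] i | cond].
  rewrite ltnS leq_eqVlt => /orP[/eqP -> | lt_is].
    by rewrite -last_nth odd_last eqxx.
  by have := steps i lt_is; rewrite /dumont_rel; case: (odd _) => /=; lia.
split.
  apply/(pathP 0) => i lt_is; have := cond i (ltnW lt_is).
  by rewrite /dumont_rel; case: (odd _) => /=; lia.
by have := cond (size s) (ltnSn _); rewrite -last_nth; case: (odd _) => /=; lia.
Qed.

Lemma dumont_seq_up t i : dumont_seq t -> i.+1 < size t -> odd (nth 0 t i) ->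
  nth 0 t i < nth 0 t i.+1.
Proof.
move=> /dumont_seqP/(_ i) step lt_it odd_ti.
by move: {step}(step (ltnW lt_it)); rewrite odd_ti /=; lia.
Qed.

Lemma dumont_seq_down t i : dumont_seq t -> i < size t -> ~~ odd (nth 0 t i) ->
  i.+1 < size t /\ nth 0 t i.+1 < nth 0 t i.
Proof.
move=> /dumont_seqP/(_ i) step lt_it even_ti.
by move: {step}(step lt_it); rewrite even_ti /=; lia.
Qed.

Lemma dumont_seq_cons2 x y u :
  dumont_seq [:: x, y & u] = dumont_rel x y && dumont_seq (y :: u).
Proof. by rewrite /= andbA. Qed.

Lemma dumont_seq_behead x t : dumont_seq (x :: t) -> dumont_seq t.
Proof. by case: t => //= y t /andP[/andP[_ ->]]. Qed.

Lemma dumont_seq_map f t : {mono f : u v / dumont_rel u v} -> {mono f : u / odd u} ->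
  dumont_seq (map f t) = dumont_seq t.
Proof.
move=> f_rel f_odd; case: t => //= x t.
by rewrite (mono_path (e := dumont_rel)) // last_map f_odd.
Qed.

Lemma dumont_rel_bump2 P : {mono bump2 P : u v / dumont_rel u v}.
Proof. by move=> u v; rewrite /dumont_rel odd_bump2 !ltn_bump2. Qed.

Lemma dumont_rel_partner x : 0 < x -> dumont_rel x (partner x).
Proof. by rewrite /dumont_rel /partner; case: (odd x) => /=; lia. Qed.

Definition pat1342 (va vb vc vd : nat) := (va < vd < vb) && (vb < vc).
Definition pat4213 (va vb vc vd : nat) := (vc < vb < vd) && (vd < va).

Definition occurs (shape : nat -> nat -> nat -> nat -> bool) (t : seq nat) a b c d :=
  [/\ a < b, b < c, c < d, d < size t &
      shape (nth 0 t a) (nth 0 t b) (nth 0 t c) (nth 0 t d)].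

Definition pattern_free shape t := forall a b c d, ~ occurs shape t a b c d.

Section Occurrences.

Variable shape : nat -> nat -> nat -> nat -> bool.

Lemma occurs_cons x t a b c d :
  occurs shape (x :: t) a.+1 b.+1 c.+1 d.+1 <-> occurs shape t a b c d.
Proof. by rewrite /occurs /= !ltnS. Qed.

Lemma occurs_behead x t a b c d : 0 < a ->
  occurs shape (x :: t) a b c d -> occurs shape t a.-1 b.-1 c.-1 d.-1.
Proof.
case: a => // a _ occ; have [ab bc cd _ _] := occ.
by case: b c d ab bc cd occ => [|b] [|c] [|d] // *; apply/(occurs_cons x).
Qed.

Lemma pattern_free_behead x t : pattern_free shape (x :: t) -> pattern_free shape t.
Proof.
by move=> free a b c d occ; apply: (free a.+1 b.+1 c.+1 d.+1); apply/occurs_cons.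
Qed.

Lemma pattern_free_map f :
  (forall va vb vc vd, shape (f va) (f vb) (f vc) (f vd) = shape va vb vc vd) ->
  forall t, pattern_free shape (map f t) <-> pattern_free shape t.
Proof.
move=> f_shape t.
have occurs_map a b c d : occurs shape (map f t) a b c d <-> occurs shape t a b c d.
  by rewrite /occurs size_map; split=> -[ab bc cd dt]; rewrite ?(nth_map 0) ?f_shape //; lia.
by split=> free a b c d /occurs_map; apply: free.
Qed.

Lemma pattern_free_cons2 x y u :
  (forall a b c d, a < 2 -> occurs shape [:: x, y & u] a b c d ->
                   occurs shape [:: x, y & u] 2 b c d) ->
  pattern_free shape u -> pattern_free shape [:: x, y & u].
Proof.
move=> to_2 free a b c d occ.
have [a' a'_gt1 {}occ] : exists2 a', 1 < a' & occurs shape [:: x, y & u] a' b c d.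
  by have [a_gt1 | a_lt2] := ltnP 1 a; [exists a | exists 2; last exact: (to_2 a)].
apply: (free a'.-2 b.-2 c.-2 d.-2).
by apply: (occurs_behead _ (occurs_behead _ occ)); lia.
Qed.

End Occurrences.

(* In both patterns the first entry is compared with the last one only, so it
   can be replaced by any entry that compares alike with the later entries. *)
Section FirstPairOccurrences.

Variable t : seq nat.
Hypothesis t_uniq : uniq t.
Hypothesis head_alike : forall k, 1 < k < size t ->
  (nth 0 t k < nth 0 t 0) = (nth 0 t k < nth 0 t 1).
Hypothesis next_alike : forall k, 3 < k < size t ->
  (nth 0 t k < nth 0 t 0) = (nth 0 t k < nth 0 t 2).

Lemma occurs1342_first_pair a b c d : a < 2 ->
  occurs pat1342 t a b c d -> occurs pat1342 t 2 b c d.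
Proof.
move=> a_lt2 [ab bc cd dt]; rewrite /occurs /pat1342.
have d_neq i : i < d -> nth 0 t d != nth 0 t i.
  by move=> lt_id; rewrite nth_uniq ?(ltn_trans lt_id dt) //; lia.
move: (@head_alike d) (@next_alike d) (d_neq 0) (d_neq 1) (d_neq 2).
by case: a b a_lt2 ab bc => [|[|a]] [|[|[|b]]] //= _ ab bc *; split; lia.
Qed.

Lemma occurs4213_first_pair a b c d : a < 2 ->
  occurs pat4213 t a b c d -> occurs pat4213 t 2 b c d.
Proof.
move=> a_lt2 [ab bc cd dt]; rewrite /occurs /pat4213.
have d_neq i : i < d -> nth 0 t d != nth 0 t i.
  by move=> lt_id; rewrite nth_uniq ?(ltn_trans lt_id dt) //; lia.
move: (@head_alike d) (@next_alike d) (d_neq 0) (d_neq 1) (d_neq 2).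
by case: a b a_lt2 ab bc => [|[|a]] [|[|[|b]]] //= _ ab bc *; split; lia.
Qed.

End FirstPairOccurrences.

(** * Prepending a pair *)

Definition is_perm m (t : seq nat) := perm_eq t (iota 1 m).

Section PermSeq.

Variables (m : nat) (t : seq nat).
Hypothesis t_perm : is_perm m t.

Lemma is_perm_uniq : uniq t.
Proof. by rewrite (perm_uniq t_perm) iota_uniq. Qed.

Lemma is_perm_size : size t = m.
Proof. by rewrite (perm_size t_perm) size_iota. Qed.

Lemma is_perm_mem v : (v \in t) = (0 < v <= m).
Proof. by rewrite (perm_mem t_perm) mem_iota add1n. Qed.

Lemma is_perm_nth i : i < m -> 0 < nth 0 t i <= m.
Proof. by move=> lt_im; rewrite -is_perm_mem mem_nth // is_perm_size. Qed.

Lemma is_perm_nth_eq i j : i < m -> j < m -> (nth 0 t i == nth 0 t j) = (i == j).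
Proof. by move=> lt_im lt_jm; rewrite nth_uniq ?is_perm_size ?is_perm_uniq. Qed.

Lemma is_perm_index v : 0 < v <= m -> exists2 q, q < m & nth 0 t q = v.
Proof.
rewrite -is_perm_mem => vt.
by exists (index v t); rewrite ?nth_index // -is_perm_size index_mem.
Qed.

End PermSeq.

Lemma is_perm_intro m t :
  uniq t -> size t = m -> (forall v, v \in t -> 0 < v <= m) -> is_perm m t.
Proof.
move=> t_uniq t_size t_range; apply: uniq_perm => //; first exact: iota_uniq.
have sub : {subset t <= iota 1 m} by move=> v /t_range; rewrite mem_iota; lia.
by have [] := uniq_min_size t_uniq sub; rewrite ?size_iota ?t_size.
Qed.

Lemma nth_neq_ltn (t : seq nat) k q :
  (forall i, i <= k -> nth 0 t i != nth 0 t q) -> k < q.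
Proof. by move=> fresh; rewrite ltnNge; apply/negP => /fresh; rewrite eqxx. Qed.

(* [bump2 (pair_max x)] frees the two values {x, partner x} for the new pair. *)
Definition cons_pair x s := [:: x, partner x & map (bump2 (pair_max x)) s].

Lemma cons_pair_inj x x' s s' : cons_pair x s = cons_pair x' s' -> x = x' /\ s = s'.
Proof. by case=> <- _ /(inj_map (@bump2_inj _)). Qed.

Lemma cons_pair_uniq x s : 0 < x -> uniq s -> uniq (cons_pair x s).
Proof.
move=> x_gt0 s_uniq; rewrite /= (map_inj_uniq (@bump2_inj _)) s_uniq !inE andbT.
rewrite negb_or -andbA; apply/and3P; split; first by case: (pair_cases x); lia.
- by apply/mapP=> -[w _ eq_x]; have := bump2_neq_pair w x_gt0; rewrite -eq_x eqxx.
- by apply/mapP=> -[w _ eq_x]; have := bump2_neq_pair w x_gt0; rewrite -eq_x eqxx andbF.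
Qed.

Lemma is_perm_cons_pair m x s :
  is_perm m s -> 0 < x -> pair_max x <= m.+2 -> is_perm m.+2 (cons_pair x s).
Proof.
move=> s_perm x_gt0 x_le; apply: is_perm_intro.
- exact: cons_pair_uniq (is_perm_uniq s_perm).
- by rewrite /= size_map (is_perm_size s_perm).
move=> v; rewrite !inE => /or3P[/eqP-> | /eqP-> | /mapP[w]]; try by case: (pair_cases x); lia.
by rewrite (is_perm_mem s_perm) => w_range ->; case: (bump2_cases (pair_max x) w); lia.
Qed.

Lemma is_perm_cons_pair_inv m x s : is_perm m.+2 (cons_pair x s) -> is_perm m s.
Proof.
move=> t_perm; apply: is_perm_intro.
- move: (is_perm_uniq t_perm); rewrite /cons_pair !cons_uniq.
  by rewrite (map_inj_uniq (@bump2_inj _)) => /and3P[].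
- by move: (is_perm_size t_perm); rewrite /= size_map => -[].
move=> w ws.
have [x_mem y_mem w_mem] : [/\ x \in cons_pair x s, partner x \in cons_pair x s
    & bump2 (pair_max x) w \in cons_pair x s].
  by rewrite /cons_pair; split; rewrite !inE ?eqxx ?map_f ?orbT.
move: x_mem y_mem w_mem; rewrite !(is_perm_mem t_perm).
by case: (pair_cases x); case: (bump2_cases (pair_max x) w); lia.
Qed.

Lemma cons_pair_decomp m t : is_perm m t -> 1 < m -> nth 0 t 1 = partner (nth 0 t 0) ->
  t = cons_pair (nth 0 t 0) (map (unbump2 (pair_max (nth 0 t 0))) (drop 2 t)).
Proof.
move=> t_perm m_gt1 t1; have := is_perm_nth t_perm (ltnW m_gt1).
move: (is_perm_uniq t_perm) (is_perm_size t_perm) t1.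
case: t {t_perm} => [|x [|y r]] /=; try lia.
move=> /and3P[x_notin y_notin _] _ y_eq x_pos; subst y.
rewrite /cons_pair drop0 -map_comp map_id_in // => v vr /=.
have v_ne_x : v != x by apply: contraNneq x_notin => <-; rewrite inE vr orbT.
have v_ne_y : v != partner x by apply: contraNneq y_notin => <-.
by apply: unbump2K; move: v_ne_x v_ne_y; case: (pair_cases x); lia.
Qed.

Lemma dumont_seq_cons_pair x s : 0 < x -> 0 < size s ->
  dumont_seq (cons_pair x s) =
  dumont_rel (partner x) (bump2 (pair_max x) (head 0 s)) && dumont_seq s.
Proof.
case: s => // s0 s' x_gt0 _; rewrite /cons_pair map_cons !dumont_seq_cons2.
by rewrite dumont_rel_partner // -map_cons (dumont_seq_map _ (dumont_rel_bump2 _) (odd_bump2 _)).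
Qed.

(** * Good sequences *)

Definition good (t : seq nat) :=
  [/\ dumont_seq t, pattern_free pat1342 t & pattern_free pat4213 t].

Lemma good_behead x t : good (x :: t) -> good t.
Proof.
by case=> /dumont_seq_behead D /pattern_free_behead A /pattern_free_behead B.
Qed.

Lemma good_bump2 P s : good (map (bump2 P) s) <-> good s.
Proof.
have free1342 t : pattern_free pat1342 (map (bump2 P) t) <-> pattern_free pat1342 t.
  by apply: pattern_free_map => va vb vc vd; rewrite /pat1342 !ltn_bump2.
have free4213 t : pattern_free pat4213 (map (bump2 P) t) <-> pattern_free pat4213 t.
  by apply: pattern_free_map => va vb vc vd; rewrite /pat4213 !ltn_bump2.
rewrite /good (dumont_seq_map _ (dumont_rel_bump2 P) (odd_bump2 P)).
by split=> -[D A B]; split=> //; by [apply/free1342 | apply/free4213].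
Qed.

Lemma good_partner_odd m t : is_perm m t -> 1 < m -> good t -> odd (nth 0 t 0) ->
  nth 0 t 1 = (nth 0 t 0).+1.
Proof.
move=> t_perm m_gt1 [D A B] par0; have t_size := is_perm_size t_perm.
have t_eq := is_perm_nth_eq t_perm.
move: (is_perm_nth t_perm (i := 0)) (is_perm_nth t_perm (i := 1)) (t_eq 0 1).
move=> t0_range t1_range t01; apply/eqP/negPn/negP => far.
have up01 : nth 0 t 0 < nth 0 t 1 by apply: (dumont_seq_up D _ par0); lia.
have [q q_lt tq] : exists2 q, q < m & nth 0 t q = (nth 0 t 0).+1.
  by apply: is_perm_index; lia.
have q_gt1 : 1 < q by apply: (@nth_neq_ltn t) => -[|[|]] //= _; lia.
have [par1 | par1] := boolP (odd (nth 0 t 1)).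
  have up12 : nth 0 t 1 < nth 0 t 2 by apply: (dumont_seq_up D _ par1); lia.
  have q_gt2 : 2 < q by apply: (@nth_neq_ltn t) => -[|[|[|]]] //= _; lia.
  by apply: (A 0 1 2 q); split; rewrite /pat1342; lia.
have [r r_lt tr] : exists2 r, r < m & nth 0 t r = (nth 0 t 1).-1.
  by apply: is_perm_index; lia.
have r_gt1 : 1 < r by apply: (@nth_neq_ltn t) => -[|[|]] //= _; lia.
have [q1_lt down_q] : q.+1 < size t /\ nth 0 t q.+1 < nth 0 t q.
  by apply: (dumont_seq_down D); rewrite ?tq /= ?negbK; lia.
have [rq | qr] : r < q \/ q < r by move: (t_eq r q); rewrite tq tr; lia.
  have up_r : nth 0 t r < nth 0 t r.+1 by apply: (dumont_seq_up D); rewrite ?tr; lia.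
  have r1_gt : nth 0 t 1 < nth 0 t r.+1 by move: (t_eq r.+1 1); lia.
  have r1_q : r.+1 < q by move: (t_eq r.+1 q); lia.
  by apply: (A 0 1 r.+1 q); split; rewrite /pat1342; lia.
have q1_r : q.+1 < r by move: (t_eq q.+1 r); lia.
by apply: (B 1 q q.+1 r); split; rewrite /pat4213; lia.
Qed.

Lemma good_partner_even m t : is_perm m t -> 1 < m -> good t -> ~~ odd (nth 0 t 0) ->
  nth 0 t 1 = (nth 0 t 0).-1.
Proof.
move=> t_perm m_gt1 [D A B] par0; have t_size := is_perm_size t_perm.
have t_eq := is_perm_nth_eq t_perm.
move: (is_perm_nth t_perm (i := 0)) (is_perm_nth t_perm (i := 1)) (t_eq 0 1).
move=> t0_range t1_range t01; apply/eqP/negPn/negP => far.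
have [_ down01] : 1 < size t /\ nth 0 t 1 < nth 0 t 0.
  by apply: (dumont_seq_down D _ par0); lia.
have [q q_lt tq] : exists2 q, q < m & nth 0 t q = (nth 0 t 0).-1.
  by apply: is_perm_index; lia.
have q_gt1 : 1 < q by apply: (@nth_neq_ltn t) => -[|[|]] //= _; lia.
have [par1 | par1] := boolP (odd (nth 0 t 1)); last first.
  have [_ down12] : 2 < size t /\ nth 0 t 2 < nth 0 t 1.
    by apply: (dumont_seq_down D _ par1); lia.
  have q_gt2 : 2 < q by apply: (@nth_neq_ltn t) => -[|[|[|]]] //= _; lia.
  by apply: (B 0 1 2 q); split; rewrite /pat4213; lia.
have [r r_lt tr] : exists2 r, r < m & nth 0 t r = (nth 0 t 1).+1.
  by apply: is_perm_index; lia.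
have r_gt1 : 1 < r by apply: (@nth_neq_ltn t) => -[|[|]] //= _; lia.
have [r1_lt down_r] : r.+1 < size t /\ nth 0 t r.+1 < nth 0 t r.
  by apply: (dumont_seq_down D); rewrite ?tr /= ?negbK; lia.
have [rq | qr] : r < q \/ q < r by move: (t_eq r q); rewrite tq tr; lia.
  have r1_lt1 : nth 0 t r.+1 < nth 0 t 1 by move: (t_eq r.+1 1); lia.
  have r1_q : r.+1 < q by move: (t_eq r.+1 q); lia.
  by apply: (B 0 1 r.+1 q); split; rewrite /pat4213; lia.
have up_q : nth 0 t q < nth 0 t q.+1 by apply: (dumont_seq_up D); rewrite ?tq; lia.
have q1_gt : nth 0 t 0 < nth 0 t q.+1 by move: (t_eq q.+1 0); lia.
have q1_r : q.+1 < r by move: (t_eq q.+1 r); lia.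
by apply: (A 1 q q.+1 r); split; rewrite /pat1342; lia.
Qed.

Lemma good_partner m t : is_perm m t -> 1 < m -> good t ->
  nth 0 t 1 = partner (nth 0 t 0).
Proof.
move=> t_perm m_gt1 t_good; case: (pair_cases (nth 0 t 0)) => -[par0 [-> _]].
  exact: good_partner_odd t_perm m_gt1 t_good par0.
exact: good_partner_even t_perm m_gt1 t_good par0.
Qed.

Lemma good_pair_above m t : is_perm m t -> 3 < m -> good t -> ~~ odd (nth 0 t 0) ->
  nth 0 t 1 = partner (nth 0 t 0) -> nth 0 t 3 = partner (nth 0 t 2) ->
  pair_max (nth 0 t 2) = (nth 0 t 0).+2.
Proof.
move=> t_perm m_gt3 [D A B] par0; rewrite {1}/partner (negbTE par0) => t1 t3.
have t_size := is_perm_size t_perm; have t_eq := is_perm_nth_eq t_perm.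
move: (is_perm_nth t_perm (i := 0)) (is_perm_nth t_perm (i := 2)) => t0_range t2_range.
have up12 : nth 0 t 1 < nth 0 t 2 by apply: (dumont_seq_up D); rewrite ?t1 /=; lia.
have t02 : nth 0 t 0 < nth 0 t 2 by move: (t_eq 2 0); lia.
apply/eqP/negPn/negP => far.
have [q q_lt tq] : exists2 q, q < m & nth 0 t q = (nth 0 t 0).+1.
  by apply: is_perm_index; lia.
move: t3; case: (pair_cases (nth 0 t 2)) => -[par2 [-> pm2]] t3.
  have q_gt3 : 3 < q by apply: (@nth_neq_ltn t) => -[|[|[|[|]]]] //= _; lia.
  by apply: (A 1 2 3 q); split; rewrite /pat1342; lia.
have q_gt3 : 3 < q by apply: (@nth_neq_ltn t) => -[|[|[|[|]]]] //= _; lia.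
have up34 : nth 0 t 3 < nth 0 t 4 by apply: (dumont_seq_up D); rewrite ?t3; lia.
have t24 : nth 0 t 2 < nth 0 t 4 by move: (t_eq 4 2); lia.
have q_gt4 : 4 < q by move: (t_eq q 4); lia.
by apply: (A 1 2 4 q); split; rewrite /pat1342; lia.
Qed.

Lemma good_pair_below m t : is_perm m t -> 3 < m -> good t -> odd (nth 0 t 0) ->
  nth 0 t 1 = partner (nth 0 t 0) -> nth 0 t 3 = partner (nth 0 t 2) ->
  (pair_max (nth 0 t 2)).+2 = (nth 0 t 0).+1.
Proof.
move=> t_perm m_gt3 [D A B] par0; rewrite {1}/partner par0 => t1 t3.
have t_size := is_perm_size t_perm; have t_eq := is_perm_nth_eq t_perm.
move: (is_perm_nth t_perm (i := 0)) (is_perm_nth t_perm (i := 2)) => t0_range t2_range.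
have [_ down12] : 2 < size t /\ nth 0 t 2 < nth 0 t 1.
  by apply: (dumont_seq_down D); rewrite ?t1 /= ?negbK; lia.
have t20 : nth 0 t 2 < nth 0 t 0 by move: (t_eq 2 0); lia.
apply/eqP/negPn/negP => far.
have [q q_lt tq] : exists2 q, q < m & nth 0 t q = (nth 0 t 0).-1.
  by apply: is_perm_index; move: (pair_cases (nth 0 t 2)); lia.
move: t3; case: (pair_cases (nth 0 t 2)) => -[par2 [-> pm2]] t3; last first.
  have q_gt3 : 3 < q by apply: (@nth_neq_ltn t) => -[|[|[|[|]]]] //= _; lia.
  by apply: (B 1 2 3 q); split; rewrite /pat4213; lia.
have q_gt3 : 3 < q by apply: (@nth_neq_ltn t) => -[|[|[|[|]]]] //= _; lia.
have [_ down34] : 4 < size t /\ nth 0 t 4 < nth 0 t 3.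
  by apply: (dumont_seq_down D); rewrite ?t3 /= ?negbK; lia.
have t42 : nth 0 t 4 < nth 0 t 2 by move: (t_eq 4 2); lia.
have q_gt4 : 4 < q by move: (t_eq q 4); lia.
by apply: (B 1 3 4 q); split; rewrite /pat4213; lia.
Qed.

(* [b = 0]: a descending pair just below the first pair of [s];
   [b = 1]: an ascending pair just above it. *)
Lemma good_cons_pair m s b : is_perm m.+2 s -> good s -> b < 2 ->
  good (cons_pair (pair_max (head 0 s) + b) s).
Proof.
move=> s_perm s_good b_lt2; have [D _ _] := s_good.
have s1 : nth 0 s 1 = partner (nth 0 s 0) by apply: good_partner s_perm _ s_good.
have s_eq := is_perm_nth_eq s_perm; have s_size := is_perm_size s_perm.
have s0_range := is_perm_nth s_perm (i := 0) isT.
rewrite -nth0; move Ex: (pair_max (nth 0 s 0) + b) => x.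
have x_gt0 : 0 < x by case: (pair_cases (nth 0 s 0)); lia.
have pm_x : pair_max x = pair_max (nth 0 s 0) + b.*2.
  by case: (pair_cases x) (pair_cases (nth 0 s 0)); lia.
have [_ A B] := (good_bump2 (pair_max x) s).2 s_good.
have t_uniq := cons_pair_uniq x_gt0 (is_perm_uniq s_perm).
have head_alike k : 1 < k < size (cons_pair x s) ->
    (nth 0 (cons_pair x s) k < x) = (nth 0 (cons_pair x s) k < partner x).
  case: k => [|[|k]] //=; rewrite size_map => k_range.
  by rewrite (nth_map 0); [exact: ltn_bump2_pair | lia].
have next_alike k : 3 < k < size (cons_pair x s) ->
    (nth 0 (cons_pair x s) k < x) = (nth 0 (cons_pair x s) k < nth 0 (cons_pair x s) 2).
  case: k => [|[|k]] //=; rewrite size_map s_size => k_range.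
  rewrite !(nth_map 0) ?s_size ?ltn_bump2; try lia.
  move: (s_eq k 0) (s_eq k 1); rewrite s1 pm_x.
  case: (pair_cases x) (pair_cases (nth 0 s 0));
  by case: (bump2_cases (pair_max (nth 0 s 0) + b.*2) (nth 0 s k)); lia.
split.
- rewrite dumont_seq_cons_pair ?s_size // D andbT -nth0 /dumont_rel pm_x.
  case: ifP; case: (pair_cases x) (pair_cases (nth 0 s 0));
  by case: (bump2_cases (pair_max (nth 0 s 0) + b.*2) (nth 0 s 0)); lia.
- apply: (pattern_free_cons2 _ A) => a b' c d.
  exact: (occurs1342_first_pair t_uniq head_alike next_alike).
- apply: (pattern_free_cons2 _ B) => a b' c d.
  exact: (occurs4213_first_pair t_uniq head_alike next_alike).
Qed.

Lemma good_decomp m t : is_perm m.+4 t -> good t ->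
  exists s b, [/\ is_perm m.+2 s, good s, b < 2 & t = cons_pair (pair_max (head 0 s) + b) s].
Proof.
move=> t_perm t_good; have t1 := good_partner t_perm isT t_good.
have [s et] : exists s, t = cons_pair (nth 0 t 0) s.
  by eexists; apply: cons_pair_decomp t_perm _ t1.
have s_perm : is_perm m.+2 s.
  by apply: (@is_perm_cons_pair_inv _ (nth 0 t 0)); rewrite -et.
have s_good : good s.
  apply/(good_bump2 (pair_max (nth 0 t 0))).
  by move: t_good; rewrite {1}et => /good_behead/good_behead.
have s1 := good_partner s_perm isT s_good; have s_size := is_perm_size s_perm.
move: (is_perm_nth t_perm (i := 0)) (is_perm_nth s_perm (i := 0)) => t0_range s0_range.
have t2 : nth 0 t 2 = bump2 (pair_max (nth 0 t 0)) (nth 0 s 0).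
  by rewrite {1}et /= (nth_map 0) ?s_size.
have t3 : nth 0 t 3 = partner (nth 0 t 2).
  rewrite t2 -bump2_partner ?odd_pair_max -?s1; try lia.
  by rewrite {1}et /= (nth_map 0) ?s_size.
have pm_t2 : if odd (nth 0 t 0) then (pair_max (nth 0 t 2)).+2 = (nth 0 t 0).+1
             else pair_max (nth 0 t 2) = (nth 0 t 0).+2.
  case: ifP => par0; first exact: good_pair_below t_perm isT t_good par0 t1 t3.
  exact: good_pair_above t_perm isT t_good (negbT par0) t1 t3.
exists s, (odd (nth 0 t 0)); split=> //; first by case: odd.
rewrite {1}et -nth0; congr cons_pair; move: pm_t2 s0_range t0_range; rewrite t2.
case: (boolP (odd (nth 0 t 0))) => par0 /=;
case: (pair_cases (nth 0 t 0)) (pair_cases (nth 0 s 0));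
case: (bump2_cases (pair_max (nth 0 t 0)) (nth 0 s 0));
by case: (pair_cases (bump2 (pair_max (nth 0 t 0)) (nth 0 s 0))); lia.
Qed.

Lemma good_size2 t : is_perm 2 t -> good t -> t = [:: 2; 1].
Proof.
move=> t_perm [D _ _].
move: (is_perm_nth t_perm (i := 0)) (is_perm_nth t_perm (i := 1)).
move: (is_perm_nth_eq t_perm (i := 0) (j := 1)) (is_perm_size t_perm) D.
case: t {t_perm} => [|x [|y []]] //= _ _; rewrite /dumont_rel andbT.
by case: ifP => _ /andP[] *; congr [:: _; _]; lia.
Qed.

Fixpoint good_perms n : seq (seq nat) :=
  if n is n'.+1 then
    [seq cons_pair (pair_max (head 0 s) + b) s | s <- good_perms n', b <- [:: 0; 1]]
  else [:: [:: 2; 1]].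

Lemma size_good_perms n : size (good_perms n) = 2 ^ n.
Proof. by elim: n => // n IH; rewrite size_allpairs IH expnS mulnC. Qed.

Lemma good_perms_uniq n : uniq (good_perms n).
Proof.
elim: n => // n IH; rewrite allpairs_uniq // => -[s b] [s' b'] _ _ /=.
by case/cons_pair_inj => + eq_s; rewrite eq_s => /addnI ->.
Qed.

Lemma mem_good_perms n t : t \in good_perms n -> is_perm (n.+1).*2 t /\ good t.
Proof.
elim: n t => [|n IH] t.
  by rewrite inE => /eqP ->; split=> //; split=> // a b c d [ab bc cd /=]; lia.
case/allpairsP=> -[s b] /= [/IH[s_perm s_good] b_in ->].
have b_lt2 : b < 2 by move: b_in; rewrite !inE; lia.
split; last exact: good_cons_pair s_perm s_good b_lt2.
have s0_range := is_perm_nth s_perm (i := 0); rewrite nth0 in s0_range.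
apply: is_perm_cons_pair s_perm _ _;
  by case: (pair_cases (pair_max (head 0 s) + b)) (pair_cases (head 0 s)); lia.
Qed.

Lemma good_perms_complete n t : is_perm (n.+1).*2 t -> good t -> t \in good_perms n.
Proof.
elim: n t => [|n IH] t t_perm t_good; first by rewrite (good_size2 t_perm t_good) inE.
have [s [b [s_perm s_good b_lt2 ->]]] := good_decomp t_perm t_good.
apply/allpairsP; exists (s, b); split=> //; first exact: IH.
by case: b b_lt2 => [|[|]].
Qed.

(** * One-line notation *)

Section OneLine.

Variable m : nat.
Implicit Type s : {perm 'I_m}.

(* [Defs.pval] is qualified because perm.v also exports a [pval]. *)
Lemma nth_oneline s (i : 'I_m) : nth 0 (oneline s) i = Defs.pval s i.
Proof. by rewrite (nth_map i) ?size_enum_ord // nth_ord_enum. Qed.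

Lemma size_oneline s : size (oneline s) = m.
Proof. by rewrite size_map size_enum_ord. Qed.

Lemma oneline_inj : injective (@oneline m).
Proof.
move=> s s' eq_ss'; apply/permP => i; apply: val_inj; apply: succn_inj.
by rewrite -[_.+1]nth_oneline eq_ss' nth_oneline.
Qed.

Lemma is_perm_oneline s : is_perm m (oneline s).
Proof.
apply: is_perm_intro; last 1 first.
- by move=> v /mapP[i _ ->]; rewrite /Defs.pval ltn_ord.
- by rewrite map_inj_uniq ?enum_uniq // => i j [] /val_inj /perm_inj.
- exact: size_oneline.
Qed.

Lemma oneline_onto t : is_perm m t -> exists s, oneline s = t.
Proof.
move=> t_perm; have t_range := is_perm_nth t_perm.
have pred_lt (i : 'I_m) : (nth 0 t i).-1 < m by have := t_range i (ltn_ord i); lia.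
have f_inj : injective (fun i => Ordinal (pred_lt i)).
  move=> i j [] eq_pred; apply/val_inj/eqP.
  rewrite -(is_perm_nth_eq t_perm (ltn_ord i) (ltn_ord j)).
  by move: (t_range i (ltn_ord i)) (t_range j (ltn_ord j)); lia.
exists (perm f_inj); apply: (@eq_from_nth _ 0); rewrite size_oneline ?(is_perm_size t_perm) //.
move=> i lt_im; rewrite -[i]/(nat_of_ord (Ordinal lt_im)) nth_oneline /Defs.pval permE /=.
by have := t_range i lt_im; lia.
Qed.

Lemma dumont1E s : dumont1 s = dumont_seq (oneline s).
Proof.
apply/forallP/dumont_seqP => [cond i | cond i]; rewrite ?size_oneline.
  by move=> lt_im; have := cond (Ordinal lt_im); rewrite -nth_oneline.
by move: (cond i); rewrite size_oneline -nth_oneline => /(_ (ltn_ord i)).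
Qed.

Lemma contains4P s t0 t1 t2 t3 :
  contains s [:: t0; t1; t2; t3] <->
  exists a b c d, [/\ a < b, b < c, c < d, d < m &
    forall x y, x < 4 -> y < 4 ->
      (nth 0 (oneline s) (nth 0 [:: a; b; c; d] x) <
       nth 0 (oneline s) (nth 0 [:: a; b; c; d] y))
      = (nth 0 [:: t0; t1; t2; t3] x < nth 0 [:: t0; t1; t2; t3] y)].
Proof.
split.
- case/existsP=> f /forallP f_ok; have {}f_ok x y := forallP (f_ok x) y.
  have f_inc (x y : 'I_4) : x < y -> f x < f y.
    by move=> lt_xy; have /andP[/implyP inc _] := f_ok x y; exact: inc.
  exists (f (@Ordinal 4 0 isT)), (f (@Ordinal 4 1 isT)),
         (f (@Ordinal 4 2 isT)), (f (@Ordinal 4 3 isT)).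
  split; [exact: f_inc | exact: f_inc | exact: f_inc | exact: ltn_ord | move=> x y x_lt y_lt].
  have f_nth (z : 'I_4) : nth 0 [:: f (@Ordinal 4 0 isT) : nat; f (@Ordinal 4 1 isT) : nat;
      f (@Ordinal 4 2 isT) : nat; f (@Ordinal 4 3 isT) : nat] z = f z.
    by case: z => -[|[|[|[|]]]] //= z_lt; congr (nat_of_ord (f _)); apply: val_inj.
  rewrite (f_nth (Ordinal x_lt)) (f_nth (Ordinal y_lt)) !nth_oneline.
  by have /andP[_ /eqP] := f_ok (Ordinal x_lt) (Ordinal y_lt).
- case=> a [b] [c] [d] [ab bc cd dm cmp].
  have idx_lt (x : 'I_4) : nth 0 [:: a; b; c; d] x < m.
    by case: x => -[|[|[|[|]]]] //= _; lia.
  apply/existsP; exists [ffun x => Ordinal (idx_lt x)].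
  apply/forallP=> x; apply/forallP=> y; rewrite !ffunE -!nth_oneline /= cmp //.
  rewrite eqxx andbT; apply/implyP.
  by case: x y => -[|[|[|[|]]]] //= _ [[|[|[|[|]]]] //= _]; lia.
Qed.

Lemma contains1342P s :
  contains s [:: 1; 3; 4; 2] <-> exists a b c d, occurs pat1342 (oneline s) a b c d.
Proof.
rewrite contains4P; split=> -[a [b [c [d [ab bc cd dm cmp]]]]]; exists a, b, c, d.
  by split; rewrite ?size_oneline // /pat1342 (cmp 0 3) // (cmp 3 1) // (cmp 1 2).
move: dm cmp; rewrite size_oneline /pat1342 => dm pat; split=> // x y.
by case: x => [|[|[|[|]]]] //= _; case: y => [|[|[|[|]]]] //= _; lia.
Qed.

Lemma contains4213P s :
  contains s [:: 4; 2; 1; 3] <-> exists a b c d, occurs pat4213 (oneline s) a b c d.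
Proof.
rewrite contains4P; split=> -[a [b [c [d [ab bc cd dm cmp]]]]]; exists a, b, c, d.
  by split; rewrite ?size_oneline // /pat4213 (cmp 2 1) // (cmp 1 3) // (cmp 3 0).
move: dm cmp; rewrite size_oneline /pat4213 => dm pat; split=> // x y.
by case: x => [|[|[|[|]]]] //= _; case: y => [|[|[|[|]]]] //= _; lia.
Qed.

End OneLine.

Lemma dumont1_avoidingE n (s : {perm 'I_(n.*2)}) :
  s \in dumont1_avoiding n [:: [:: 1; 3; 4; 2]; [:: 4; 2; 1; 3]] <-> good (oneline s).
Proof.
rewrite inE /= /avoids andbT dumont1E; split.
- case/and3P=> D A B; split=> // a b c d occ.
    by move/negP: A; apply; apply/contains1342P; exists a, b, c, d.
  by move/negP: B; apply; apply/contains4213P; exists a, b, c, d.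
- case=> D A B; apply/and3P; split=> //; apply/negP.
    by case/contains1342P=> a [b [c [d /A]]].
  by case/contains4213P=> a [b [c [d /B]]].
Qed.

Lemma card_dumont1_avoiding n :
  #|dumont1_avoiding n.+1 [:: [:: 1; 3; 4; 2]; [:: 4; 2; 1; 3]]| = size (good_perms n).
Proof.
rewrite cardE -(size_map (@oneline _)); apply/perm_size/uniq_perm.
- by rewrite (map_inj_uniq (@oneline_inj _)) enum_uniq.
- exact: good_perms_uniq.
move=> t; apply/mapP/idP => [[s] | t_in].
  rewrite mem_enum => /dumont1_avoidingE s_good ->.
  exact: good_perms_complete (is_perm_oneline s) s_good.
have [t_perm t_good] := mem_good_perms t_in; have [s es] := oneline_onto t_perm.
by exists s; rewrite // mem_enum; apply/dumont1_avoidingE; rewrite es.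
Qed.

Theorem theorem3p9 (n : nat) :
  1 <= n ->
  #|dumont1_avoiding n [:: [:: 1; 3; 4; 2]; [:: 4; 2; 1; 3]]| = 2 ^ n.-1.
Proof. by case: n => // n _; rewrite card_dumont1_avoiding size_good_perms. Qed.
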